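(* Let $d\ge2$, let $(c_t)_{t\ge0}\subset\mathbb{S}^d$ be an arbitrary sequence of unit vectors, and let $\omega:\mathrm{P}^d_+\to\mathbb{R}_{\ge0}$ satisfy $\omega(X)\le C\sqrt{\lambda_{\max}(X)}$ for all $X\in\mathrm{P}^d_+$, for some constant $C>0$. Let $$\lambda_0\ge\max\Big\{2,\ \sqrt{\tfrac{2}{3(d-1)}}\,2dC+\tfrac{2}{3(d-1)}\Big\},$$ and define $V_0=\lambda_0 I_{d\times d}$ and $V_{t+1}=V_t+\omega(V_t)\sum_{i=1}^{d-1}P_{t,i}$, where $$P_{t,i}=a^+_{t+1,i}(a^+_{t+1,i})^{\mathsf T}+a^-_{t+1,i}(a^-_{t+1,i})^{\mathsf T},\quad a^\pm_{t+1,i}=\frac{\tilde a^\pm_{t+1,i}}{\|\tilde a^\pm_{t+1,i}\|_2},\quad \tilde a^\pm_{t+1,i}=c_t\pm\frac{1}{\sqrt{\lambda_{t,1}}}v_{t,i},$$ with $\lambda_{t,1}\le\dots\le\lambda_{t,d}$ the eigenvalues of $V_t$ and $v_{t,1},\dots,v_{t,d}$ corresponding orthonormal eigenvectors (for any choice of such eigenvectors). Then $$\lambda_{\min}(V_t)\ge\sqrt{\tfrac{2}{3(d-1)}\lambda_{\max}(V_t)}\quad\text{for all }t\ge0.$$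
   Context: $\mathbb{S}^d=\{x\in\mathbb{R}^d:\|x\|_2=1\}$; $\mathrm{P}^d_+$ is the set of real symmetric positive semidefinite $d\times d$ matrices; $\lambda_{\min},\lambda_{\max}$ denote smallest and largest eigenvalues. *)

From HB Require Import structures.
From mathcomp Require Import all_boot all_order all_algebra.
From mathcomp Require Import all_classical all_reals.
Set Implicit Arguments. Unset Strict Implicit. Unset Printing Implicit Defensive.
Import Order.TTheory GRing.Theory Num.Theory.
Local Open Scope ring_scope.
Local Open Scope classical_set_scope.

Definition psd (R : realType) (d : nat) (X : 'M[R]_d) : Prop :=
  X^T = X /\ forall v : 'cV[R]_d, 0 <= (v^T *m X *m v) 0 0.

(* Smallest / largest eigenvalue of a square real matrix (intended for
   symmetric matrices, whose spectrum is a finite nonempty set of reals). *)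
Definition lmin (R : realType) (d : nat) (X : 'M[R]_d) : R :=
  inf [set a : R | eigenvalue X a].
Definition lmax (R : realType) (d : nat) (X : 'M[R]_d) : R :=
  sup [set a : R | eigenvalue X a].

Definition norm2 (R : realType) (d : nat) (x : 'cV[R]_d) : R :=
  Num.sqrt (\sum_(i < d) x i 0 ^+ 2).

Definition normalize (R : realType) (d : nat) (x : 'cV[R]_d) : 'cV[R]_d :=
  (norm2 x)^-1 *: x.

From HB Require Import structures.
From mathcomp Require Import all_boot all_order all_algebra.
From mathcomp Require Import all_classical all_reals.
From mathcomp Require Import ring lra.

Set Implicit Arguments.
Unset Strict Implicit.
Unset Printing Implicit Defensive.
Import Order.TTheory GRing.Theory Num.Theory.
Local Open Scope ring_scope.

(* Writing [al = 2 / (3 (d - 1))], the invariant [lambda0 <= lmin V_t] and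
   [al * lmax V_t <= (lmin V_t)^2] is preserved by every update.  Let [x] be a
   unit eigenvector of the new smallest eigenvalue and [S] its mass on the
   eigenvectors [v_{t,1}, ..., v_{t,d-1}] used by the update.  Since
   [c_t +- v_{t,i} / sqrt lambda_{t,1}] has squared norm at most 3, each
   [P_{t,i}] contributes at least [(2/3) <v_{t,i}, x>^2 / lambda_{t,1}], so the
   new smallest eigenvalue is at least a convex combination of
   [L + 2 omega / (3 L)] and [lmax V_t], where [L = lmin V_t].  The largest
   eigenvalue grows by at most [2 (d - 1) omega], and the bound on [lambda0]
   with [omega <= C sqrt (lmax V_t)] yields
   [(4/3) omega <= (lmax V_t)^2 - al * lmax V_t], which is what keeps the
   invariant. *)

Section Dot.
Variables (R : realFieldType) (k : nat).
Implicit Types x y z : 'cV[R]_k.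

Definition dot x y : R := (x^T *m y) 0 0.

Lemma dotE x y : dot x y = \sum_i x i 0 * y i 0.
Proof. by rewrite /dot mxE; apply: eq_bigr => i _; rewrite mxE. Qed.

Lemma dotC x y : dot x y = dot y x.
Proof. by rewrite !dotE; apply: eq_bigr => i _; rewrite mulrC. Qed.

Lemma dot0r x : dot x 0 = 0.
Proof. by rewrite /dot mulmx0 mxE. Qed.

Lemma dotDr x y z : dot x (y + z) = dot x y + dot x z.
Proof. by rewrite /dot mulmxDr mxE. Qed.

Lemma dotBr x y z : dot x (y - z) = dot x y - dot x z.
Proof. by rewrite /dot mulmxBr !mxE. Qed.

Lemma dotZr a x y : dot x (a *: y) = a * dot x y.
Proof. by rewrite /dot -scalemxAr mxE. Qed.

Lemma dotDl x y z : dot (y + z) x = dot y x + dot z x.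
Proof. by rewrite dotC dotDr !(dotC x). Qed.

Lemma dotBl x y z : dot (y - z) x = dot y x - dot z x.
Proof. by rewrite dotC dotBr !(dotC x). Qed.

Lemma dotZl a x y : dot (a *: y) x = a * dot y x.
Proof. by rewrite dotC dotZr !(dotC x). Qed.

Lemma dot_sumr x (I : Type) (r : seq I) (P : pred I) (F : I -> 'cV[R]_k) :
  dot x (\sum_(i <- r | P i) F i) = \sum_(i <- r | P i) dot x (F i).
Proof. by rewrite /dot mulmx_sumr summxE. Qed.

Lemma dot_ge0 x : 0 <= dot x x.
Proof. by rewrite dotE; apply: sumr_ge0 => i _; rewrite -expr2 sqr_ge0. Qed.

Lemma dot_eq0 x : dot x x = 0 -> x = 0.
Proof.
rewrite dotE => /eqP; rewrite psumr_eq0 => [/allP x0|i _]; last first.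
  by rewrite -expr2 sqr_ge0.
apply/matrixP => i j; rewrite (ord1 j) mxE.
by have := x0 i (mem_index_enum _); rewrite mulf_eq0 orbb => /eqP.
Qed.

Lemma dot_CauchySchwarz x y : dot x y ^+ 2 <= dot x x * dot y y.
Proof.
have [/dot_eq0 ->|y_neq0] := eqVneq (dot y y) 0.
  by rewrite dot0r dot0r expr0n mulr0.
have y_gt0 : 0 < dot y y by rewrite lt_def y_neq0 dot_ge0.
have := dot_ge0 (dot y y *: x - dot x y *: y).
rewrite !(dotBl, dotBr, dotZl, dotZr) (dotC y x); nra.
Qed.

Lemma mul_cV_1x1 x (a : 'M[R]_1) : x *m a = a 0 0 *: x.
Proof.
by apply/matrixP => i j; rewrite (ord1 j) !mxE big_ord1 mulrC.
Qed.

Lemma dot_mul_outer x y : dot x ((y *m y^T) *m x) = dot x y ^+ 2.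
Proof. by rewrite -mulmxA mul_cV_1x1 dotZr expr2 -/(dot y x) dotC. Qed.

End Dot.

Section Spectral.
Variables (R : realFieldType) (k : nat) (V Q : 'M[R]_k) (lam : 'I_k -> R).
Hypothesis HQ : Q^T *m Q = 1%:M.
Hypothesis HV : forall i, V *m col i Q = lam i *: col i Q.

Lemma dot_col i j : dot (col i Q) (col j Q) = (i == j)%:R.
Proof.
have := congr1 (fun M : 'M[R]_k => M i j) HQ; rewrite !mxE => <-.
by rewrite dotE; apply: eq_bigr => l _; rewrite !mxE.
Qed.

Lemma dot_col_id i : dot (col i Q) (col i Q) = 1.
Proof. by rewrite dot_col eqxx. Qed.

Lemma trmx_mul_col x j : (Q^T *m x) j 0 = dot (col j Q) x.
Proof. by rewrite dotE mxE; apply: eq_bigr => l _; rewrite !mxE. Qed.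

Lemma dot_mulmxr x y : dot x (Q *m y) = dot (Q^T *m x) y.
Proof. by rewrite /dot mulmxA trmx_mul trmxK. Qed.

Lemma spectral_decomposition : V = Q *m diag_mx (\row_j lam j) *m Q^T.
Proof.
have VQ : V *m Q = Q *m diag_mx (\row_j lam j).
  apply/matrixP => i j; rewrite mul_mx_diag !mxE.
  have := congr1 (fun M : 'cV[R]_k => M i 0) (HV j); rewrite !mxE mulrC => <-.
  by apply: eq_bigr => l _; rewrite !mxE.
by rewrite -VQ -mulmxA (mulmx1C HQ) mulmx1.
Qed.

Lemma spectral_sym : V^T = V.
Proof.
by rewrite [in LHS]spectral_decomposition !trmx_mul trmxK tr_diag_mx mulmxA
  -spectral_decomposition.
Qed.

Lemma dot_mulmx_spectral x :
  dot x (V *m x) = \sum_j lam j * dot (col j Q) x ^+ 2.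
Proof.
rewrite {1}spectral_decomposition -!mulmxA dot_mulmxr dotE.
apply: eq_bigr => j _.
by rewrite trmx_mul_col mul_diag_mx mxE trmx_mul_col mxE expr2 mulrCA mulrA.
Qed.

Lemma sum_dot_col_sqr x : \sum_j dot (col j Q) x ^+ 2 = dot x x.
Proof.
rewrite -{3}[x]mul1mx -(mulmx1C HQ) -mulmxA dot_mulmxr dotE.
by apply: eq_bigr => j _; rewrite trmx_mul_col expr2.
Qed.

Lemma eigval_dot i : lam i = dot (col i Q) (V *m col i Q).
Proof. by rewrite HV dotZr dot_col_id mulr1. Qed.

Lemma eigval_scalar a i : V = a%:M -> lam i = a.
Proof. by move=> Va; rewrite eigval_dot Va mul_scalar_mx dotZr dot_col_id mulr1. Qed.

Lemma eigenvalue_col i : eigenvalue V (lam i).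
Proof.
apply/eigenvalueP; exists (col i Q)^T.
  by rewrite -{1}spectral_sym -trmx_mul HV linearZ.
apply/eqP => /(congr1 trmx); rewrite trmxK trmx0 => col0.
by have := dot_col_id i; rewrite col0 dot0r => /eqP; rewrite eq_sym oner_eq0.
Qed.

Section Rayleigh.
Variables (L M : R).
Hypothesis lam_ge : forall j, L <= lam j.
Hypothesis lam_le : forall j, lam j <= M.

Lemma rayleigh_ge x : L * dot x x <= dot x (V *m x).
Proof.
rewrite dot_mulmx_spectral -sum_dot_col_sqr mulr_sumr; apply: ler_sum => j _.
by apply: ler_wpM2r; rewrite ?sqr_ge0.
Qed.

Lemma rayleigh_le x : dot x (V *m x) <= M * dot x x.
Proof.
rewrite dot_mulmx_spectral -sum_dot_col_sqr mulr_sumr; apply: ler_sum => j _.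
by apply: ler_wpM2r; rewrite ?sqr_ge0.
Qed.

Lemma eigenvalue_bounds a : eigenvalue V a -> L <= a <= M.
Proof.
move=> /eigenvalueP [v Hv v_neq0].
have Vv : V *m v^T = a *: v^T by rewrite -{1}spectral_sym -trmx_mul Hv linearZ.
have v_gt0 : 0 < dot v^T v^T.
  rewrite lt_def dot_ge0 andbT; apply: contraNneq v_neq0 => /dot_eq0 /eqP.
  by rewrite -trmx0 (inj_eq trmx_inj).
have := rayleigh_ge v^T; have := rayleigh_le v^T; rewrite Vv dotZr.
by rewrite !ler_pM2r // => aM La; rewrite La aM.
Qed.

End Rayleigh.
End Spectral.

Section Normalize.
Variables (R : realType) (k : nat).
Implicit Types (x y z c v : 'cV[R]_k) (w : R).

Lemma norm2_dot x : norm2 x = Num.sqrt (dot x x).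
Proof. by rewrite /norm2 dotE; congr Num.sqrt; apply: eq_bigr => i _; rewrite expr2. Qed.

Lemma norm2_eq1 x : norm2 x = 1 -> dot x x = 1.
Proof. by rewrite norm2_dot -{2}(sqr_sqrtr (dot_ge0 x)) => ->; rewrite expr1n. Qed.

Lemma sqr_dot_normalize x z : dot x (normalize z) ^+ 2 = dot x z ^+ 2 / dot z z.
Proof.
by rewrite /normalize dotZr exprMn exprVn norm2_dot sqr_sqrtr ?dot_ge0 // mulrC.
Qed.

Lemma sqr_dot_normalize_le x z : dot x (normalize z) ^+ 2 <= dot x x.
Proof.
rewrite sqr_dot_normalize; have [->|z_neq0] := eqVneq (dot z z) 0.
  by rewrite invr0 mulr0 dot_ge0.
by rewrite ler_pdivrMr ?dot_CauchySchwarz // lt_def z_neq0 dot_ge0.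
Qed.

Lemma sqr_dot_normalize_ge x z b : 0 < b -> dot z z <= b ->
  dot x z ^+ 2 / b <= dot x (normalize z) ^+ 2.
Proof.
move=> b_gt0 zb; rewrite sqr_dot_normalize.
have [/dot_eq0 ->|z_neq0] := eqVneq (dot z z) 0; first by rewrite dot0r !expr0n !mul0r.
apply: ler_wpM2l; first exact: sqr_ge0.
by rewrite lef_pV2 ?posrE // lt_def z_neq0 dot_ge0.
Qed.

Lemma dot_add_scale_le3 c v w : dot c c = 1 -> dot v v = 1 -> w ^+ 2 <= 1 / 2 ->
  dot (c + w *: v) (c + w *: v) <= 3.
Proof.
move=> c1 v1 w2; rewrite !(dotDl, dotDr, dotZl, dotZr) c1 v1 (dotC v c).
have cv1 : dot c v ^+ 2 <= 1 by have := dot_CauchySchwarz c v; rewrite c1 v1 mulr1.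
have wcv : (w * dot c v) ^+ 2 <= 1 / 2.
  by rewrite exprMn; apply: le_trans w2; rewrite ler_piMr ?sqr_ge0.
have : w * dot c v <= 3 / 4 by nra.
nra.
Qed.

(* The paper's [P_{t,i}] is [proj_pair c_t v_{t,i} (lambda_{t,1}^(-1/2))]. *)
Definition proj_pair (c v : 'cV[R]_k) (w : R) : 'M[R]_k :=
  let ap := normalize (c + w *: v) in
  let am := normalize (c - w *: v) in
  ap *m ap^T + am *m am^T.

Lemma dot_mulmx_proj_pair x c v w : dot x (proj_pair c v w *m x) =
  dot x (normalize (c + w *: v)) ^+ 2 + dot x (normalize (c - w *: v)) ^+ 2.
Proof. by rewrite mulmxDl dotDr !dot_mul_outer. Qed.

Lemma dot_mulmx_proj_pair_le x c v w : dot x (proj_pair c v w *m x) <= 2 * dot x x.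
Proof. by rewrite dot_mulmx_proj_pair mulr2n mulrDl mul1r lerD ?sqr_dot_normalize_le. Qed.

(* Both perturbed directions have norm at most [sqrt 3], and the cross terms
   of [<x, c + w v>^2 + <x, c - w v>^2] cancel. *)
Lemma dot_mulmx_proj_pair_ge x c v w : dot c c = 1 -> dot v v = 1 ->
  w ^+ 2 <= 1 / 2 -> 2 / 3 * w ^+ 2 * dot v x ^+ 2 <= dot x (proj_pair c v w *m x).
Proof.
move=> c1 v1 w2; rewrite dot_mulmx_proj_pair.
have wN2 : (- w) ^+ 2 <= 1 / 2 by rewrite sqrrN.
have := sqr_dot_normalize_ge x (ltr0Sn _ 2) (dot_add_scale_le3 c1 v1 w2).
have := sqr_dot_normalize_ge x (ltr0Sn _ 2) (dot_add_scale_le3 c1 v1 wN2).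
rewrite scaleNr -/(c - w *: v) dotBr dotDr !dotZr (dotC x v).
set p := dot x c; set q := dot v x; nra.
Qed.

End Normalize.

Lemma sum_split_ord_max (V : nmodType) (k : nat) (F : 'I_k.+1 -> V) :
  \sum_j F j = \sum_(j < k.+1 | (j < k)%N) F j + F ord_max.
Proof.
rewrite (bigD1 ord_max) //= addrC; congr (_ + _); apply: eq_bigl => j.
by rewrite -val_eqE /= ltn_neqAle -ltnS ltn_ord andbT.
Qed.

Section SortedSpectrum.
Local Open Scope classical_set_scope.
Variables (R : realType) (k : nat) (V Q : 'M[R]_k.+1) (lam : 'I_k.+1 -> R).
Hypothesis HQ : Q^T *m Q = 1%:M.
Hypothesis HV : forall i, V *m col i Q = lam i *: col i Q.
Hypothesis lam_sorted : forall i j : 'I_k.+1, (i <= j)%N -> lam i <= lam j.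

Lemma lam_ge_min j : lam ord0 <= lam j.
Proof. exact: lam_sorted. Qed.

Lemma lam_le_max j : lam j <= lam ord_max.
Proof. exact/lam_sorted/leq_ord. Qed.

Lemma lmin_lmax_sorted : lmin V = lam ord0 /\ lmax V = lam ord_max.
Proof.
have bounds := eigenvalue_bounds HQ HV lam_ge_min lam_le_max.
have lb : lbound [set a | eigenvalue V a] (lam ord0) by move=> a /bounds/andP[].
have ub : ubound [set a | eigenvalue V a] (lam ord_max) by move=> a /bounds/andP[].
have ne : [set a | eigenvalue V a] !=set0.
  by exists (lam ord0); exact: eigenvalue_col HQ HV ord0.
rewrite /lmin /lmax; split; apply/le_anti/andP; split.
- by apply: (ge_inf (ex_intro _ _ lb)); exact: eigenvalue_col HQ HV ord0.
- exact: lb_le_inf.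
- exact: ge_sup.
- by apply: (ub_le_sup (ex_intro _ _ ub)); exact: eigenvalue_col HQ HV ord_max.
Qed.

Lemma psd_sorted : 0 <= lam ord0 -> psd V.
Proof.
move=> lam0_ge0; split; first exact: spectral_sym HQ HV.
move=> v; rewrite -mulmxA -/(dot v (V *m v)).
apply: le_trans (rayleigh_ge HQ HV (fun j => le_trans lam0_ge0 (lam_ge_min j)) v).
by rewrite mul0r.
Qed.

End SortedSpectrum.

Section ScalarInequalities.
Variable R : rcfType.

Lemma div_3m_mul (m : R) : m != 0 -> 2 / (3 * m) * m = 2 / 3.
Proof. by move=> m_neq0; rewrite invfM mulrA mulfVK. Qed.

Lemma convex_ge_min (S s a b : R) : 0 <= S -> 0 <= s -> S + s = 1 ->
  Num.min a b <= S * a + s * b.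
Proof.
move=> S0 s0 Ss.
have Sab x : S * x + s * x = x by rewrite -mulrDl Ss mul1r.
by rewrite minEle; have [ab|ba] := leP a b; [have := Sab a | have := Sab b]; nra.
Qed.

(* With [u := sqrt (M al) * 2 (m + 1)] one has [u >= 4 / 3] and
   [M^2 - al M >= sqrt M * C * u]. *)
Lemma weight_le_gap (m C M om : R) : 1 <= m -> 0 < C -> 2 <= M ->
  Num.sqrt (2 / (3 * m)) * (2 * (m + 1) * C) + 2 / (3 * m) <= M ->
  om <= C * Num.sqrt M -> om * (4 / 3) <= M ^+ 2 - 2 / (3 * m) * M.
Proof.
move=> m1 C0 M2 hM omC.
set al := 2 / (3 * m) in hM *.
have alm : al * m = 2 / 3.
  by rewrite div_3m_mul // gt_eqF // (lt_le_trans ltr01 m1).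
have al_gt0 : 0 < al by nra.
set u := Num.sqrt M * Num.sqrt al * (2 * (m + 1)).
have u2 : u ^+ 2 = M * al * (4 * (m + 1) ^+ 2).
  by rewrite /u !exprMn !sqr_sqrtr ?(ltW al_gt0) //; [ring | lra].
have u_ge : 4 / 3 <= u.
  have u0 : 0 <= u by rewrite /u !mulr_ge0 ?sqrtr_ge0 //; lra.
  have : 2 * al * (4 * (m + 1) ^+ 2) <= u ^+ 2.
    by rewrite u2; apply: ler_wpM2r; [rewrite mulr_ge0 ?sqr_ge0 | nra].
  nra.
have gap : Num.sqrt M * (u * C) <= M ^+ 2 - al * M.
  have -> : Num.sqrt M * (u * C) = M * (Num.sqrt al * (2 * (m + 1) * C)).
    by rewrite /u -{3}(sqr_sqrtr (_ : 0 <= M)); [ring | lra].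
  have hX : Num.sqrt al * (2 * (m + 1) * C) <= M - al by lra.
  by rewrite expr2 [al * M]mulrC -mulrBr ler_wpM2l //; lra.
have CsM : 0 <= C * Num.sqrt M by rewrite mulr_ge0 ?sqrtr_ge0 ?ltW.
nra.
Qed.

Lemma balanced_step (al L M L' M' om : R) :
  0 < L -> L <= M -> al * M <= L ^+ 2 -> 0 <= om ->
  om * (4 / 3) <= M ^+ 2 - al * M ->
  Num.min (L + 2 / 3 * (om / L)) M <= L' -> al * M' <= al * M + om * (4 / 3) ->
  L <= L' /\ al * M' <= L' ^+ 2.
Proof.
move=> L0 LM balL om0 gapM hL' hM'.
set A := L + 2 / 3 * (om / L) in hL'.
have omL : 0 <= om / L by rewrite divr_ge0 // ltW.
have LA : L <= A by rewrite /A; lra.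
have LL' : L <= L' by apply: le_trans hL'; rewrite le_min LA LM.
have gapA : L ^+ 2 + om * (4 / 3) <= A ^+ 2.
  have omLL : om = om / L * L by rewrite divfK ?gt_eqF.
  rewrite /A {1}omLL; nra.
have min_ge0 : 0 <= Num.min A M by rewrite le_min; apply/andP; split; lra.
have sq : Num.min A M ^+ 2 <= L' ^+ 2 by rewrite ler_sqr ?nnegrE //; lra.
have min_sq : al * M + om * (4 / 3) <= Num.min A M ^+ 2.
  by rewrite minEle; have [AM|MA] := leP A M; lra.
split => //; lra.
Qed.

End ScalarInequalities.

Section OneStep.
Variables (R : realType) (n : nat) (c : 'cV[R]_n.+2) (omega : R).
Variables (V V' Q Q' : 'M[R]_n.+2) (lam lam' : 'I_n.+2 -> R).
Hypothesis c1 : norm2 c = 1.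
Hypothesis omega_ge0 : 0 <= omega.
Hypothesis HQ : Q^T *m Q = 1%:M.
Hypothesis HV : forall i, V *m col i Q = lam i *: col i Q.
Hypothesis lam_sorted : forall i j : 'I_n.+2, (i <= j)%N -> lam i <= lam j.
Hypothesis HQ' : Q'^T *m Q' = 1%:M.
Hypothesis HV' : forall i, V' *m col i Q' = lam' i *: col i Q'.
Hypothesis V'E : V' = V + omega *:
  \sum_(i < n.+2 | (i < n.+1)%N) proj_pair c (col i Q) (Num.sqrt (lam ord0))^-1.

Lemma dot_mulmx_step x : dot x (V' *m x) = dot x (V *m x) + omega *
  \sum_(i < n.+2 | (i < n.+1)%N)
     dot x (proj_pair c (col i Q) (Num.sqrt (lam ord0))^-1 *m x).
Proof. by rewrite V'E mulmxDl dotDr -scalemxAl dotZr mulmx_suml dot_sumr. Qed.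

Lemma lmax_step : lam' ord_max <= lam ord_max + omega * (2 * n.+1%:R).
Proof.
have x1 := dot_col_id HQ' ord_max.
rewrite (eigval_dot HQ' HV') dot_mulmx_step; apply: lerD.
  by have := rayleigh_le HQ HV (lam_le_max lam_sorted) (col ord_max Q'); rewrite x1 mulr1.
apply: ler_wpM2l => //.
have -> : 2 * n.+1%:R = \sum_(i < n.+2 | (i < n.+1)%N) (2 : R).
  by rewrite (big_ord_narrow (leqnSn n.+1)) sumr_const card_ord mulr_natr.
apply: ler_sum => i _.
by have := dot_mulmx_proj_pair_le (col ord_max Q') c (col i Q)
  (Num.sqrt (lam ord0))^-1; rewrite x1 mulr1.
Qed.

(* The unit eigenvector [x] of [lam' ord0] spreads its mass as [S] on the
   eigenvectors of [V] probed by the update and [1 - S] on the top one. *)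
Lemma lmin_step : 2 <= lam ord0 ->
  Num.min (lam ord0 + 2 / 3 * (omega / lam ord0)) (lam ord_max) <= lam' ord0.
Proof.
move=> L2; set L := lam ord0; set w := (Num.sqrt L)^-1.
have L_gt0 : 0 < L by apply: lt_le_trans L2.
have w2 : w ^+ 2 = L^-1 by rewrite /w exprVn sqr_sqrtr // ltW.
have w2_le : w ^+ 2 <= 1 / 2 by rewrite w2 mul1r lef_pV2 ?posrE.
set x := col ord0 Q'; pose y j := dot (col j Q) x.
set S := \sum_(j < n.+2 | (j < n.+1)%N) y j ^+ 2.
have Ss : S + y ord_max ^+ 2 = 1.
  by rewrite -sum_split_ord_max sum_dot_col_sqr // (dot_col_id HQ').
have V_ge : S * L + y ord_max ^+ 2 * lam ord_max <= dot x (V *m x).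
  rewrite (dot_mulmx_spectral HQ HV) sum_split_ord_max mulr_suml [_ * lam _]mulrC.
  rewrite lerD2r; apply: ler_sum => j _; rewrite mulrC.
  by apply: ler_wpM2r; rewrite ?sqr_ge0 ?(lam_ge_min lam_sorted).
have P_ge : 2 / 3 * (omega / L) * S <= omega * \sum_(i < n.+2 | (i < n.+1)%N)
    dot x (proj_pair c (col i Q) w *m x).
  have -> : 2 / 3 * (omega / L) * S =
      omega * \sum_(i < n.+2 | (i < n.+1)%N) (2 / 3 * w ^+ 2 * y i ^+ 2).
    by rewrite -mulr_sumr w2 -/S; ring.
  apply: ler_wpM2l => //; apply: ler_sum => i _.
  exact: dot_mulmx_proj_pair_ge (norm2_eq1 c1) (dot_col_id HQ i) w2_le.
have S_ge0 : 0 <= S by apply: sumr_ge0 => j _; exact: sqr_ge0.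
rewrite (eigval_dot HQ' HV') -/x dot_mulmx_step -/L -/w.
apply: le_trans (convex_ge_min _ _ S_ge0 (sqr_ge0 _) Ss) _; lra.
Qed.

Lemma balanced_step_spectrum (C l0 : R) : 0 < C -> 2 <= l0 ->
  Num.sqrt (2 / (3 * n.+1%:R)) * (2 * n.+2%:R * C) + 2 / (3 * n.+1%:R) <= l0 ->
  omega <= C * Num.sqrt (lam ord_max) ->
  l0 <= lam ord0 -> 2 / (3 * n.+1%:R) * lam ord_max <= lam ord0 ^+ 2 ->
  l0 <= lam' ord0 /\ 2 / (3 * n.+1%:R) * lam' ord_max <= lam' ord0 ^+ 2.
Proof.
move=> C0 l0_ge2 hl0 omC l0L balL.
have L2 : 2 <= lam ord0 := le_trans l0_ge2 l0L.
have LM := lam_le_max lam_sorted ord0.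
rewrite -[n.+2%:R]natr1 in hl0.
have gap := weight_le_gap (ler1n _ n.+1) C0 (le_trans L2 LM)
  (le_trans hl0 (le_trans l0L LM)) omC.
have hM' : 2 / (3 * n.+1%:R) * lam' ord_max <=
    2 / (3 * n.+1%:R) * lam ord_max + omega * (4 / 3).
  have al_ge0 : 0 <= 2 / (3 * n.+1%:R) :> R by rewrite divr_ge0 ?mulr_ge0.
  have alm : 2 / (3 * n.+1%:R) * n.+1%:R = 2 / 3 :> R.
    exact/div_3m_mul/lt0r_neq0/ltr0Sn.
  apply: le_trans (ler_wpM2l al_ge0 lmax_step) _.
  have -> : 2 / (3 * n.+1%:R) * (lam ord_max + omega * (2 * n.+1%:R)) =
      2 / (3 * n.+1%:R) * lam ord_max + omega * 2 * (2 / (3 * n.+1%:R) * n.+1%:R).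
    by ring.
  by rewrite alm lerD2l -mulrA; apply: ler_wpM2l => //; lra.
have [LL' bal'] := balanced_step (lt_le_trans (ltr0Sn _ 1) L2) LM balL omega_ge0
  gap (lmin_step L2) hM'.
by split => //; apply: le_trans l0L LL'.
Qed.

End OneStep.

Theorem theorem2 (R : realType) (n : nat)
  (c : nat -> 'cV[R]_n.+2)
  (omega : 'M[R]_n.+2 -> R) (C lambda0 : R)
  (V : nat -> 'M[R]_n.+2) (lam : nat -> 'I_n.+2 -> R) (Q : nat -> 'M[R]_n.+2) :
  (forall t, norm2 (c t) = 1) ->
  0 < C ->
  (forall X, psd X -> 0 <= omega X /\ omega X <= C * Num.sqrt (lmax X)) ->
  Num.max 2 (Num.sqrt (2 / (3 * n.+1%:R)) * (2 * n.+2%:R * C) + 2 / (3 * n.+1%:R))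
    <= lambda0 ->
  (forall t, (Q t)^T *m Q t = 1%:M) ->
  (forall t (i : 'I_n.+2), V t *m col i (Q t) = lam t i *: col i (Q t)) ->
  (forall t (i j : 'I_n.+2), (i <= j)%N -> lam t i <= lam t j) ->
  V 0%N = lambda0%:M ->
  (forall t, V t.+1 = V t + omega (V t) *:
     \sum_(i < n.+2 | (i < n.+1)%N)
        (let ap := normalize (c t + (Num.sqrt (lam t ord0))^-1 *: col i (Q t)) in
         let am := normalize (c t - (Num.sqrt (lam t ord0))^-1 *: col i (Q t)) in
         ap *m ap^T + am *m am^T)) ->
  forall t, Num.sqrt (2 / (3 * n.+1%:R) * lmax (V t)) <= lmin (V t).
Proof.
move=> c1 C0 omega_bound lambda0_ge HQ HV lam_sorted V0 VS t.
move: lambda0_ge; rewrite ge_max => /andP[l0_ge2 l0_ge].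
have extremes t := lmin_lmax_sorted (HQ t) (HV t) (lam_sorted t).
suff balanced : forall t, lambda0 <= lam t ord0 /\
    2 / (3 * n.+1%:R) * lam t ord_max <= lam t ord0 ^+ 2.
  have [-> ->] := extremes t; have [l0L balL] := balanced t.
  by apply: le_trans (ler_wsqrtr balL) _; rewrite sqrtr_sqr ger0_norm //; lra.
elim=> [|s [l0L balL]].
  rewrite !(eigval_scalar (HQ 0%N) (HV 0%N) _ V0) expr2; split => //.
  apply: ler_wpM2r; first lra.
  have m1 : 1 <= n.+1%:R :> R by rewrite ler1n.
  by rewrite ler_pdivrMr ?mulr_gt0 ?ltr0Sn //; nra.
have lam_ge0 : 0 <= lam s ord0 by apply: le_trans l0L; lra.
have [om_ge0 om_le] :=
  omega_bound _ (psd_sorted (HQ s) (HV s) (lam_sorted s) lam_ge0).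
rewrite (extremes s).2 in om_le.
by have := balanced_step_spectrum (c1 s) om_ge0 (HQ s) (HV s) (lam_sorted s)
  (HQ s.+1) (HV s.+1) (VS s) C0 l0_ge2 l0_ge om_le l0L balL.
Qed.
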